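(* Let $G=(A\cup B,E)$ be a bipartite graph that has a grounded L-representation which is nice with respect to the bipartition $(A,B)$. Then $G$ is a stick graph.
   Context: An L-shape is the union of a vertical segment and a horizontal segment such that the bottom end-point of the vertical segment coincides with the left end-point of the horizontal segment; the top end-point of the vertical segment is its anchor. A grounded L-representation of a graph assigns an L-shape to each vertex, all anchors lying on a common horizontal line, so that two vertices are adjacent iff their L-shapes intersect. For a bipartite graph $G=(A\cup B,E)$, such a representation is nice if every L-shape representing a vertex of $A$ meets other L-shapes only on its horizontal segment, and every L-shape representing a vertex of $B$ meets other L-shapes only on its vertical segment. A stick graph is a bipartite graph that is the intersection graph of a set of vertical segments (one part) and a set of horizontal segments (the other part) such that the bottom end-points of the vertical segments and the left end-points of the horizontal segments all lie on a common straight line of slope $-1$. *)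

From HB Require Import structures.
From mathcomp Require Import all_boot all_order all_algebra.
From mathcomp Require Import reals.
Set Implicit Arguments. Unset Strict Implicit. Unset Printing Implicit Defensive.
Import Order.TTheory GRing.Theory Num.Theory.
Local Open Scope ring_scope.

Section Geometry.
Variable R : realType.

Definition vseg (x y0 y1 : R) (p : R * R) : Prop :=
  p.1 = x /\ y0 <= p.2 <= y1.
Definition hseg (y x0 x1 : R) (p : R * R) : Prop :=
  p.2 = y /\ x0 <= p.1 <= x1.

(* An L-shape: anchor (ax, ay) = top of the vertical segment; the vertical
   segment has length vlen and goes down to the corner (ax, ay - vlen); the
   horizontal segment has length hlen and goes right from the corner. *)
Record Lshape := MkL { ax : R; ay : R; vlen : R; hlen : R }.

Definition L_wf (L : Lshape) : Prop := 0 < vlen L /\ 0 < hlen L.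
Definition L_vert (L : Lshape) (p : R * R) : Prop :=
  vseg (ax L) (ay L - vlen L) (ay L) p.
Definition L_hor (L : Lshape) (p : R * R) : Prop :=
  hseg (ay L - vlen L) (ax L) (ax L + hlen L) p.
Definition L_pts (L : Lshape) (p : R * R) : Prop := L_vert L p \/ L_hor L p.

Variable V : finType.

Definition grounded_L_rep (e : rel V) (rep : V -> Lshape) : Prop :=
  (forall v, L_wf (rep v)) /\
  (exists c : R, forall v, ay (rep v) = c) /\
  (forall u v, u != v ->
     (e u v <-> exists p, L_pts (rep u) p /\ L_pts (rep v) p)).

Definition nice_rep (A : {set V}) (rep : V -> Lshape) : Prop :=
  forall u v p, u != v -> L_pts (rep u) p -> L_pts (rep v) p ->
    (u \in A -> L_hor (rep u) p) /\ (u \notin A -> L_vert (rep u) p).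

Definition bipartite_wrt (e : rel V) (S : {set V}) : Prop :=
  forall u v, e u v -> (u \in S) != (v \in S).

(* Stick representation on the line y = c - x: vertex v is given by the
   position t v (bottom/left end-point (t v, c - t v)) and length len v > 0;
   vertices of S are vertical segments going up, those of ~: S horizontal
   segments going right. *)
Definition vstick (c t l : R) (p : R * R) : Prop := vseg t (c - t) (c - t + l) p.
Definition hstick (c t l : R) (p : R * R) : Prop := hseg (c - t) t (t + l) p.

Definition stick_graph (e : rel V) : Prop :=
  exists S : {set V}, bipartite_wrt e S /\
  exists (t len : V -> R) (c : R),
    (forall v, 0 < len v) /\
    (forall u v, u \in S -> v \notin S ->
       (e u v <-> exists p, vstick c (t u) (len u) p /\ hstick c (t v) (len v) p)).

End Geometry.

From mathcomp Require Import all_boot all_order all_algebra.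
From mathcomp Require Import reals.
From mathcomp Require Import lra.
Import Order.TTheory GRing.Theory Num.Theory.
Local Open Scope ring_scope.

(* By niceness, the L-shape of a in A meets that of b in B exactly when the
   horizontal arm of a crosses the vertical arm of b, i.e. when the arm of a
   spans the anchor abscissa of b and a is not lower than b.  Niceness also
   forbids a vertical arm of A from crossing a horizontal arm of A, so among
   the A-vertices whose arm spans the abscissa of b, heights decrease with the
   abscissa; hence the neighbours of b are exactly those whose anchor is
   within some distance len b to the left of b.  Putting every vertex at the
   abscissa of its anchor on the line y = -x, with horizontal sticks of length
   hlen for A and vertical sticks of length len b for B, realizes the graph. *)

Lemma down_closed_threshold (R : realFieldType) (I : finType)
    (Q P : pred I) (d : I -> R) :
  (forall i, Q i -> 0 < d i) ->
  (forall i j, Q i -> Q j -> P i -> d j <= d i -> P j) ->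
  exists2 l, 0 < l & forall i, Q i -> P i = (d i <= l).
Proof.
move=> d_gt0 P_down.
case: (pickP (fun i => Q i && P i)) => [i0 QPi0 | noQP].
  case: (@arg_maxP _ _ _ i0 (fun i => Q i && P i) d QPi0) => imax /andP[Qm Pm] dmax.
  exists (d imax) => [|i Qi]; first exact: d_gt0.
  apply/idP/idP => [Pi | /(P_down _ _ Qm Qi Pm) //].
  by apply: dmax; rewrite Qi Pi.
case: (pickP Q) => [i0 Qi0 | noQ]; last by exists 1 => // i; rewrite noQ.
case: (@arg_minP _ _ _ i0 Q d Qi0) => imin Qm dmin.
exists (d imin / 2) => [|i Qi]; first by have := d_gt0 _ Qm; lra.
have := noQP i; rewrite Qi /= => ->; apply/esym/negbTE; rewrite -ltNge.
by have := dmin _ Qi; have := d_gt0 _ Qm; lra.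
Qed.

Lemma L_hor_vertP (R : realType) (L M : Lshape R) :
  (exists p, L_hor L p /\ L_vert M p) <->
  ax L <= ax M <= ax L + hlen L /\ ay M - vlen M <= ay L - vlen L <= ay M.
Proof.
split => [[p [[E1 /andP[i1 i2]] [E2 /andP[j1 j2]]]] | [/andP[i1 i2] /andP[j1 j2]]].
  by rewrite -E1 -E2 i1 i2 j1 j2.
by exists (ax M, ay L - vlen L); rewrite /L_hor /L_vert /hseg /vseg /= i1 i2 j1 j2.
Qed.

Lemma vstick_hstickP (R : realType) (c tu lu tv lv : R) :
  (exists p, vstick c tu lu p /\ hstick c tv lv p) <->
  tv <= tu <= tv + lv /\ tu - tv <= lu.
Proof.
split => [[p [[E1 /andP[i1 i2]] [E2 /andP[j1 j2]]]] | [/andP[j1 j2] le]].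
  by split; [apply/andP; split |]; lra.
exists (tu, c - tv); rewrite /vstick /hstick /vseg /hseg /=.
by split; split => //; apply/andP; split; lra.
Qed.

Lemma bipartite_wrtC (V : finType) (e : rel V) (S : {set V}) :
  bipartite_wrt e S -> bipartite_wrt e (~: S).
Proof. by move=> eS u v /eS; rewrite !inE; do 2 case: (_ \in S). Qed.

Section NiceRepresentation.

Set Implicit Arguments.
Unset Strict Implicit.

Context {R : realType} {V : finType} {e : rel V} {A : {set V}}.
Context {rep : V -> Lshape R} {c : R}.
Hypothesis rep_wf : forall v, L_wf (rep v).
Hypothesis rep_grounded : forall v, ay (rep v) = c.
Hypothesis rep_adj : forall u v, u != v ->
  (e u v <-> exists p, L_pts (rep u) p /\ L_pts (rep v) p).
Hypothesis rep_nice : nice_rep A rep.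

Local Notation x v := (ax (rep v)).
Local Notation h v := (vlen (rep v)).
Local Notation w v := (hlen (rep v)).

Let h_gt0 v : 0 < h v. Proof. by case: (rep_wf v). Qed.

Let neq_AC a b : a \in A -> b \notin A -> a != b.
Proof. by move=> Ha; apply: contraNneq => <-. Qed.

Lemma edge_ACE a b : a \in A -> b \notin A ->
  e a b <-> x a <= x b <= x a + w a /\ h a <= h b.
Proof.
move=> Ha Hb; have ab := neq_AC Ha Hb.
have -> : e a b <-> exists p, L_hor (rep a) p /\ L_vert (rep b) p.
  rewrite (rep_adj ab); split => -[p [pa pb]]; exists p; last by split; [right|left].
  have ba : b != a by rewrite eq_sym.
  by split; [have [/(_ Ha)] := rep_nice ab pa pb
            | have [_ /(_ Hb)] := rep_nice ba pb pa].
rewrite L_hor_vertP !rep_grounded.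
have := h_gt0 a.
by split=> -[span hab]; split=> //; [case/andP: hab | apply/andP; split]; lra.
Qed.

Lemma anchor_x_neq a v : a \in A -> a != v -> x a != x v.
Proof.
move=> Ha av; apply/eqP => xav.
have top u : L_pts (rep u) (x u, c).
  by left; split=> //=; rewrite rep_grounded; apply/andP; split; have := h_gt0 u; lra.
have := top v; rewrite -xav => top_v.
have [/(_ Ha) [/= c_corner _] _] := rep_nice av (top a) top_v.
by move: c_corner; rewrite rep_grounded; have := h_gt0 a; lra.
Qed.

Lemma nested_vlen_le a a' : a \in A -> a' \in A -> a != a' ->
  x a' < x a <= x a' + w a' -> h a <= h a'.
Proof.
move=> Ha Ha' aa' /andP[lt le]; rewrite leNgt; apply/negP => hlt.
have on_a : L_pts (rep a) (x a, c - h a').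
  by left; split=> //=; rewrite rep_grounded; apply/andP; split; have := h_gt0 a'; lra.
have on_a' : L_pts (rep a') (x a, c - h a').
  by right; split=> /=; rewrite ?rep_grounded //; apply/andP; split; lra.
have [/(_ Ha) [/= corner _] _] := rep_nice aa' on_a on_a'.
by move: corner; rewrite rep_grounded; lra.
Qed.

Lemma edge_AC_shift a a' b : a \in A -> a' \in A -> b \notin A ->
  e a b -> x a <= x a' -> x a' <= x b <= x a' + w a' -> e a' b.
Proof.
move=> Ha Ha' Hb eab le_aa' span'.
case: (eqVneq a a') => [<- // | aa'].
have [/andP[_ xb_le] hab] := (edge_ACE Ha Hb).1 eab.
have lt_aa' : x a < x a' by rewrite lt_neqAle le_aa' anchor_x_neq.
have a'a : a' != a by rewrite eq_sym.
apply/(edge_ACE Ha' Hb); split => //; case/andP: span' => le_b _.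
by apply: le_trans hab; apply: nested_vlen_le; rewrite // lt_aa' (le_trans le_b).
Qed.

Lemma stick_lengths : exists len : V -> R,
  [/\ forall v, 0 < len v, forall a, a \in A -> len a = w a &
      forall a b, a \in A -> b \notin A ->
        e a b <-> x a <= x b <= x a + w a /\ x b - x a <= len b].
Proof.
have len_ex v : exists l, [/\ 0 < l, v \in A -> l = w v &
    v \notin A -> forall a, a \in A -> x a <= x v <= x a + w a ->
      e a v = (x v - x a <= l)].
  case Hv: (v \in A); first by exists (w v); case: (rep_wf v).
  have [||l l_gt0 threshold] := @down_closed_threshold R V
    [pred a | (a \in A) && (x a <= x v <= x a + w a)] (fun a => e a v)
    (fun a => x v - x a).
  - move=> a /andP[Ha /andP[le _]].
    by rewrite subr_gt0 lt_neqAle le anchor_x_neq ?neq_AC ?Hv.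
  - move=> a a' /andP[Ha _] /andP[Ha' span'] eav.
    rewrite lerD2l lerN2 => le; exact: edge_AC_shift Ha Ha' (negbT Hv) eav le span'.
  by exists l; split => // _ a Ha span; apply: threshold; apply/andP.
have [len len_spec] := fin_all_exists len_ex.
exists len; split; first by move=> v; case: (len_spec v).
  by move=> a Ha; case: (len_spec a) => _ -> .
move=> a b Ha Hb; have [_ _ /(_ Hb a Ha) thr] := len_spec b.
split => [eab | [span le]]; last by rewrite thr.
by have [span _] := (edge_ACE Ha Hb).1 eab; split; rewrite -?thr.
Qed.

End NiceRepresentation.

Theorem proposition2 (R : realType) (V : finType) (e : rel V) (A : {set V}) :
  symmetric e -> irreflexive e -> bipartite_wrt e A ->
  (exists rep : V -> Lshape R, grounded_L_rep e rep /\ nice_rep A rep) ->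
  stick_graph R e.
Proof.
move=> e_sym _ e_bip [rep [[rep_wf [[c rep_c] rep_adj]] rep_nice]].
have [len [len_gt0 len_A edge_sticks]] := stick_lengths rep_wf rep_c rep_adj rep_nice.
exists (~: A); split; first exact: bipartite_wrtC.
exists (fun v => ax (rep v)), len, 0; split => // u v; rewrite !inE negbK => Hu Hv.
by rewrite vstick_hstickP len_A // e_sym; apply: edge_sticks.
Qed.
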